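(* Let $k\ge 1$, let $b_0<\dots<b_k$ and $r_0>\dots>r_k=0$ be reals, let $s_i=\frac{b_i-b_{i-1}}{r_{i-1}-r_i}$ for $1\le i\le k$, and assume $s_1<\dots<s_k$. Let $p^i_1(t)=\min\{1,(e^{t/s_i}-1)/(e-1)\}$ for $1\le i\le k$, and let $\hat p_0=1-p^1_1$, $\hat p_i=p^i_1-p^{i+1}_1$ ($1\le i\le k-1$), $\hat p_k=p^k_1$. Then there is an online randomized strategy, i.e. a random nondecreasing sequence of transition times $0\le t_1\le t_2\le\dots\le t_k\le\infty$ (where $t_i$ is the time of the transition from state $i-1$ to state $i$, starting in state $0$), whose profile is $\hat p$: for every $t\ge 0$ and every $i\in\{0,\dots,k\}$, the probability that the strategy is in state $i$ at time $t$ equals $\hat p_i(t)$.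
   Context: In the additive multislope ski rental problem there are states $0,\dots,k$; state $i$ has buying cost $b_i$ and rental rate $r_i$, transitions are only of the form $i-1\to i$, and a deterministic strategy is a nondecreasing sequence of transition times. A randomized strategy is a probability distribution over deterministic strategies; its profile is the vector $(p_0(t),\dots,p_k(t))$ where $p_i(t)$ is the probability of being in state $i$ at time $t$. *)

From HB Require Import structures.
From mathcomp Require Import all_boot all_order all_algebra.
From mathcomp Require Import all_classical all_reals all_analysis.
From mathcomp Require Import measurable_realfun.
Set Implicit Arguments. Unset Strict Implicit. Unset Printing Implicit Defensive.
Import Order.TTheory GRing.Theory Num.Theory.
Local Open Scope ring_scope.

Definition slope {R : realType} (b r : nat -> R) (i : nat) : R :=
  (b i - b i.-1) / (r i.-1 - r i).

Definition p1 {R : realType} (s : nat -> R) (i : nat) (t : R) : R :=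
  Num.min 1 ((expR (t / s i) - 1) / (expR 1 - 1)).

Definition phat {R : realType} (k : nat) (s : nat -> R) (i : nat) (t : R) : R :=
  if i == 0%N then 1 - p1 s 1 t
  else if (i < k)%N then p1 s i t - p1 s i.+1 t
  else p1 s k t.

(* State at time x of the deterministic strategy with transition times
   tt 1, ..., tt k (tt i = time of the transition i-1 -> i, in [0, +oo]):
   the number of transitions already performed, i.e. #{ i in 1..k | tt i <= x }. *)
Definition state {R : realType} (k : nat) (tt : nat -> \bar R) (x : R) : nat :=
  (\sum_(1 <= i < k.+1) ((tt i <= x%:E)%E : nat))%N.

From HB Require Import structures.
From mathcomp Require Import all_boot all_order all_algebra.
From mathcomp Require Import all_classical all_reals all_analysis.
From mathcomp Require Import measurable_realfun.
From mathcomp Require Import zify.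
Set Implicit Arguments. Unset Strict Implicit. Unset Printing Implicit Defensive.
Import Order.TTheory GRing.Theory Num.Theory Order.NatMonotonyTheory.
Local Open Scope ring_scope.
Local Open Scope classical_set_scope.

(* All transitions are driven by one uniform variable U on [0, 1]: the i-th
   transition happens at t_i = s_i ln (1 + (e - 1) U), the quantile transform
   for the CDF p^i_1.  Thus t_i <= x iff U <= (e^(x/s_i) - 1)/(e - 1); as s_i
   increases these thresholds decrease in i, so t_1 <= ... <= t_k and the state
   at time x is >= i exactly when U lies below the i-th threshold.  Hence
   P(state >= i) = p^i_1(x), and \hat p_i is the difference of consecutive
   such tails. *)

Section downward_closed_count.
Local Open Scope nat_scope.

Lemma sum_bool_le (f : nat -> bool) m n : \sum_(m <= j < n) f j <= n - m.
Proof.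
rewrite -[n - m]muln1 -sum_nat_const_nat.
by apply: leq_sum => j _; exact: leq_b1.
Qed.

Variables (f : nat -> bool) (k : nat).
Hypothesis f_downward : forall i j, 1 <= i <= j -> j <= k -> f j -> f i.

Lemma count_downward_ge i : 1 <= i <= k ->
  (i <= \sum_(1 <= j < k.+1) f j) = f i.
Proof.
move=> /andP[i1 ik]; case fi: (f i).
- rewrite (big_cat_nat _ (n := i.+1)) //=.
  have -> : \sum_(1 <= j < i.+1) f j = \sum_(1 <= j < i.+1) 1.
    apply: eq_big_nat => j /andP[j1 ji].
    by rewrite (@f_downward j i) ?j1.
  by rewrite sum_nat_const_nat muln1 subn1 leq_addr.
- rewrite (big_cat_nat _ (n := i)) //=; last by lia.
  have -> : \sum_(i <= j < k.+1) f j = 0.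
    rewrite big_nat_cond big1 // => j /andP[/andP[ij jk] _].
    case fj: (f j) => //; suff : f i by rewrite fi.
    by apply: (f_downward _ _ fj); lia.
  by apply/negbTE; rewrite -ltnNge addn0 (leq_ltn_trans (sum_bool_le _ _ _)) //; lia.
Qed.

End downward_closed_count.

Section transition_times.
Context {R : realType}.

Definition transition_cdf (s t : R) : R := (expR (t / s) - 1) / (expR 1 - 1).

(* Clamped at 0 so that the times are nonnegative also outside [0, 1]. *)
Definition transition_time (s u : R) : R :=
  s * ln (1 + (expR 1 - 1) * Num.max u 0).

Let e_sub1_gt0 : 0 < expR 1 - 1 :> R.
Proof. by rewrite subr_gt0 expR_gt1. Qed.

Lemma transition_cdf_ge0 s t : 0 < s -> 0 <= t -> 0 <= transition_cdf s t.
Proof.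
move=> s0 t0; rewrite /transition_cdf divr_ge0 ?(ltW e_sub1_gt0) //.
by rewrite subr_ge0 -expR0 ler_expR divr_ge0 // ltW.
Qed.

Lemma transition_cdf_antitone s s' t : 0 < s -> s <= s' -> 0 <= t ->
  transition_cdf s' t <= transition_cdf s t.
Proof.
move=> s0 ss' t0; rewrite /transition_cdf ler_pM2r ?invr_gt0 // lerD2r ler_expR.
by rewrite ler_wpM2l // lef_pV2 // posrE (lt_le_trans s0).
Qed.

Lemma ln_transition_ge0 u : 0 <= ln (1 + (expR 1 - 1) * Num.max u 0 : R).
Proof. by rewrite ln_ge0 // lerDl mulr_ge0 ?(ltW e_sub1_gt0) // le_max lexx orbT. Qed.

Lemma transition_time_ge0 s u : 0 <= s -> 0 <= transition_time s u.
Proof. by move=> s0; rewrite /transition_time mulr_ge0 // ln_transition_ge0. Qed.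

Lemma transition_time_homo u : {homo transition_time^~ u : s s' / s <= s'}.
Proof. by move=> s s' ss'; rewrite /transition_time ler_wpM2r // ln_transition_ge0. Qed.

Lemma measurable_transition_time s : measurable_fun setT (transition_time s).
Proof.
apply: measurable_funM => //; apply: measurableT_comp; first exact: measurable_ln.
apply: measurable_funD => //; apply: measurable_funM => //.
exact: measurable_maxr.
Qed.

Lemma transition_time_le s t u : 0 < s -> 0 <= t ->
  (transition_time s u <= t) = (u <= transition_cdf s t).
Proof.
move=> s0 t0; rewrite /transition_time mulrC -ler_pdivlMr //.
have arg_gt0 : 0 < 1 + (expR 1 - 1) * Num.max u 0.
  by rewrite ltr_pwDl // mulr_ge0 ?(ltW e_sub1_gt0) // le_max lexx orbT.
rewrite -{1}(expRK (t / s)) ler_ln ?posrE ?expR_gt0 // -lerBrDl mulrC.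
by rewrite -ler_pdivlMr // ge_max transition_cdf_ge0 // andbT.
Qed.

Definition uniform01 : probability _ R := uniform_prob (@ltr01 R).

Lemma uniform01_le q : 0 <= q -> uniform01 [set u | u <= q] = (Num.min 1 q)%:E.
Proof.
move=> q0; rewrite /uniform01 /= /uniform_prob integral_uniform_pdf.
have -> : [set u : R | u <= q] `&` `[0, 1] = `[0, Num.min 1 q]%classic.
  apply/seteqP; split=> u; rewrite /= !in_itv /= le_min.
    by move=> [uq /andP[-> ->]]; rewrite uq.
  by move=> /andP[-> /andP[-> ->]].
rewrite (eq_integral (cst 1%:E)); last first.
  by move=> u; rewrite inE /= in_itv /= /uniform_pdf le_min => /andP[-> /andP[-> _]];
    rewrite subr0 invr1.
rewrite integral_cst //= mul1e lebesgue_measure_itv /= lte_fin oppr0 adde0.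
have : 0 <= Num.min 1 q by rewrite le_min ler01.
by rewrite le_eqVlt => /orP[/eqP <-|->]; rewrite ?ltxx.
Qed.

Lemma probability_eq_nat {d} {T : measurableType d}
    (P : probability T R) (N : T -> nat) i :
  measurable [set w | (i <= N w)%N] -> measurable [set w | (i < N w)%N] ->
  P [set w | N w = i] = (P [set w | (i <= N w)%N] - P [set w | (i < N w)%N])%E.
Proof.
move=> mge mgt.
have -> : [set w | N w = i] = [set w | (i <= N w)%N] `\` [set w | (i < N w)%N].
  apply/seteqP; split=> w /=; first by move=> ->; rewrite ltnn.
  by move=> [ige /negP]; rewrite -leqNgt => Nle; apply/eqP; rewrite eqn_leq Nle.
rewrite measureD ?(le_lt_trans (probability_le1 _ mge)) ?ltry //.
by rewrite setIidr // => w /=; apply: ltnW.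
Qed.

Lemma state_le k (tt : nat -> \bar R) x : (state k tt x <= k)%N.
Proof. by have := sum_bool_le (fun i => (tt i <= x%:E)%E) 1 k.+1; rewrite subn1. Qed.

Lemma slope_gt0 k (b r : nat -> R) :
  (forall i, (i < k)%N -> b i < b i.+1) -> (forall i, (i < k)%N -> r i.+1 < r i) ->
  forall i, (1 <= i <= k)%N -> 0 < slope b r i.
Proof.
move=> hb hr i /andP[i1 ik]; have := hb i.-1; have := hr i.-1.
rewrite prednK // => hri hbi; rewrite /slope divr_gt0 // subr_gt0.
- by apply: hbi; lia.
- by apply: hri; lia.
Qed.

Lemma nondecn_of_lt_steps k (f : nat -> R) :
  (forall i, (1 <= i)%N -> (i < k)%N -> f i < f i.+1) ->
  forall i j, (1 <= i <= j)%N -> (j <= k)%N -> f i <= f j.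
Proof.
move=> hf i j /andP[i1 ij] jk.
apply: (nondecn_inP (D := [pred n | 1 <= n <= k]%N)) => //=.
- move=> m n; rewrite !inE => /andP[m1 _] /andP[_ nk] l.
  by rewrite !ltEnat /= => /andP[ml ln]; rewrite inE; lia.
- by move=> m; rewrite !inE => /andP[m1 _] /andP[_ m1k]; apply/ltW/hf.
- by rewrite inE i1 (leq_trans ij jk).
- by rewrite inE jk (leq_trans i1 ij).
Qed.

(* The probability of having made at least [i] transitions by time [t]. *)
Definition state_tail k (s : nat -> R) i (t : R) : R :=
  if i == 0%N then 1 else if (i <= k)%N then p1 s i t else 0.

Lemma phatE k (s : nat -> R) i t : (1 <= k)%N -> (i <= k)%N ->
  phat k s i t = state_tail k s i t - state_tail k s i.+1 t.
Proof.
move=> k1 ik; rewrite /phat /state_tail /=.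
case: ifP => [/eqP->|i0]; first by rewrite k1.
rewrite ik; case: ltnP => // ki.
by rewrite subr0 (_ : i = k) //; apply/eqP; rewrite eqn_leq ik.
Qed.

Section transition_state.
Variables (k : nat) (s : nat -> R) (x : R).
Hypothesis s_gt0 : forall i, (1 <= i <= k)%N -> 0 < s i.
Hypothesis s_homo : forall i j, (1 <= i <= j)%N -> (j <= k)%N -> s i <= s j.
Hypothesis x_ge0 : 0 <= x.

Lemma le_state_transition u j : (1 <= j <= k)%N ->
  (j <= state k (fun i => (transition_time (s i) u)%:E) x)%N =
  (u <= transition_cdf (s j) x).
Proof.
move=> jk.
rewrite /state (eq_big_nat _ _ (F2 := fun i => ((u <= transition_cdf (s i) x)%R : nat))).
  apply: count_downward_ge jk => i i' ii' i'k /= /le_trans; apply.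
  apply: transition_cdf_antitone => //; first by apply: s_gt0; lia.
  exact: s_homo.
by move=> i ik; rewrite lee_fin transition_time_le // s_gt0.
Qed.

Lemma uniform01_state_ge j : (j <= k.+1)%N ->
  let A := [set u | (j <= state k (fun i => (transition_time (s i) u)%:E) x)%N] in
  measurable A /\ uniform01 A = (state_tail k s j x)%:E.
Proof.
move=> jk A; rewrite /state_tail; case: ifPn => [/eqP j0|j0].
  by rewrite (_ : A = setT) ?probability_setT //; apply/seteqP; split=> u; rewrite /A j0.
case: ifPn => jk'.
  have -> : A = [set u | u <= transition_cdf (s j) x].
    by apply/seteqP; split=> u; rewrite /A /= le_state_transition // lt0n j0.
  split; first by rewrite -set_itvNyc; exact: measurable_itv.
  by rewrite uniform01_le // transition_cdf_ge0 // s_gt0 // lt0n j0.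
rewrite (_ : A = set0) ?measure0 //; apply/seteqP; split=> u //=.
by move=> jN; move: jk'; rewrite (leq_trans jN) ?state_le.
Qed.

End transition_state.

End transition_times.

Theorem lemma3p3 (R : realType) (k : nat) (b r : nat -> R) :
  (1 <= k)%N ->
  (forall i, (i < k)%N -> b i < b i.+1) ->
  (forall i, (i < k)%N -> r i.+1 < r i) ->
  r k = 0 ->
  (forall i, (1 <= i)%N -> (i < k)%N -> slope b r i < slope b r i.+1) ->
  exists (d : measure_display) (T : measurableType d) (P : probability T R)
         (tt : nat -> T -> \bar R),
    (forall i, (1 <= i <= k)%N -> measurable_fun [set: T] (tt i : T -> \bar R)) /\
    (forall w, (0 <= tt 1%N w)%E /\
               (forall i, (1 <= i)%N -> (i < k)%N -> (tt i w <= tt i.+1 w)%E)) /\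
    (forall (x : R) (i : nat), 0 <= x -> (i <= k)%N ->
       P [set w | state k (fun j => tt j w) x = i] = (phat k (slope b r) i x)%:E).
Proof.
move=> k1 hb hr _ hs; set s := slope b r.
have s_gt0 := slope_gt0 hb hr.
have s_homo := nondecn_of_lt_steps hs.
pose tt i u := (transition_time (s i) u)%:E.
exists _, _, uniform01, tt; split; [|split].
- by move=> i _; apply/measurable_EFinP; exact: measurable_transition_time.
- move=> u; split; first by rewrite lee_fin transition_time_ge0 // ltW // s_gt0 // k1.
  by move=> i i1 ik; rewrite lee_fin transition_time_homo // ltW // hs.
move=> x i x0 ik.
have [mge PgeE] := uniform01_state_ge s_gt0 s_homo x0 (leqW ik).
have [mgt PgtE] := uniform01_state_ge s_gt0 s_homo x0 (ik : (i.+1 <= k.+1)%N).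
by rewrite (probability_eq_nat uniform01 mge mgt) PgeE PgtE phatE // EFinB.
Qed.
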